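(* Consider the following model (an ''ideal sensory unit''). The input is a stimulus $\mu(t)$, and the state is a positive real number $m(t)>0$ (a continuous approximation of the sample size), evolving by $$\dot m(t) = g\big(m(t), m_{eq}(\mu(t))\big),$$ where: (i) $\sigma_R^2>0$ is a constant; (ii) $\sigma^2(\mu)$ and $m_{eq}(\mu)>0$ are continuous, non-decreasing functions of $\mu$; (iii) $g(m,m_{eq})=0$ if and only if $m=m_{eq}$, and $m$ tracks $m_{eq}$ monotonically, i.e. $g(m,m_{eq})$ has the sign of $m_{eq}-m$. The uncertainty is $$H(\mu,m)=\tfrac12\log\!\Big(\sigma_R^2+\frac{\sigma^2(\mu)}{m}\Big)+\text{constant}.$$ The sensory information is the differential form $$d\mathscr{I} = -\frac{\partial H}{\partial m}(\mu,m)\,dm = \frac{\sigma^2(\mu)}{2m\,\big(m\sigma_R^2+\sigma^2(\mu)\big)}\,dm,$$ which is the negative of the relaxation component $\frac{\partial H}{\partial m}\,dm$ in the decomposition $dH=\frac{\partial H}{\partial\mu}d\mu+\frac{\partial H}{\partial m}dm$. Let $\mu(t)$, $t\in[0,T]$, be a cyclic stimulus that generates a trajectory $t\mapsto(\mu(t),m(t))$ forming a closed curve $C$ in $(\mu,m)$ state space. Then $$\oint_C d\mathscr{I} = \int_0^T \frac{\sigma^2(\mu(t))}{2m(t)\big(m(t)\sigma_R^2+\sigma^2(\mu(t))\big)}\,\dot m(t)\,dt \;\ge\; 0 .$$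
   Context: In this model, $\mu$ is the stimulus intensity and $m$ is the number of samples taken of a noisy stimulus with variance $\sigma^2(\mu)$. The constant $\sigma_R^2$ is a representational-noise variance, and $m_{eq}(\mu)$ is the equilibrium sample size for input $\mu$. The firing-rate output is $F=kH$ for a constant $k>0$; this relation is not needed for the statement. ''Cyclic'' means the stimulus returns to its initial value and the state trajectory closes up, i.e. $(\mu(T),m(T))=(\mu(0),m(0))$. *)

From Stdlib Require Import Reals.
From Coquelicot Require Import Coquelicot.
Open Scope R_scope.

Definition uncertainty (sR2 : R) (sigma2 : R -> R) (mu m : R) : R :=
  / 2 * ln (sR2 + sigma2 mu / m).

(* Coefficient of dm in the sensory-information form dI = -(dH/dm) dm. *)
Definition info_coef (sR2 : R) (sigma2 : R -> R) (mu m : R) : R :=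
  sigma2 mu / (2 * m * (m * sR2 + sigma2 mu)).

Definition tracks_monotonically (g : R -> R -> R) : Prop :=
  forall m meq, 0 < m -> 0 < meq ->
    (g m meq = 0 <-> m = meq) /\
    (0 < g m meq <-> m < meq) /\
    (g m meq < 0 <-> meq < m).

From Stdlib Require Import Reals Lra.
From Coquelicot Require Import Coquelicot.
Open Scope R_scope.

(* With v = sigma^2(mu)/sigma_R^2 the integrand is (m'/m - m'/(m+v))/2, and m'/m integrates
   to 0 around a cycle, so it suffices that the integral of m'/(m+v) is <= 0.  The state m rises
   only while m < m_eq(mu) and falls only while m > m_eq(mu); as v and m_eq are both
   nondecreasing in mu, a level function phi with v >= phi(m) while m rises and v <= phi(m)
   while m falls gives m'/(m+v) <= m'/(m+phi(m)), whose integral vanishes around a cycle by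
   substitution.  Such a phi need not be continuous, so we use a continuous one that is only
   correct outside a band |m - m_eq| < delta; on that band |m'| < eps uniformly, which costs
   O(eps T), and eps -> 0. *)

Lemma real_Lub_Rbar_ub (E : R -> Prop) (K r : R) :
  (forall x, E x -> x <= K) -> E r -> r <= real (Lub_Rbar E).
Proof.
  intros HK Hr. destruct (Lub_Rbar_correct E) as [ub lub].
  destruct (Lub_Rbar E) as [l| |]; simpl.
  - exact (ub r Hr).
  - destruct (lub (Finite K) HK).
  - destruct (ub r Hr).
Qed.

Lemma real_Lub_Rbar_lub (E : R -> Prop) (b r : R) :
  E r -> (forall x, E x -> x <= b) -> real (Lub_Rbar E) <= b.
Proof.
  intros Hr Hb. destruct (Lub_Rbar_correct E) as [ub lub].
  destruct (Lub_Rbar E) as [l| |]; simpl.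
  - exact (lub (Finite b) Hb).
  - destruct (lub (Finite b) Hb).
  - destruct (ub r Hr).
Qed.

Lemma lipschitz_continuous (f : R -> R) (L : R) :
  0 <= L -> (forall x y, f x <= f y + L * Rabs (x - y)) ->
  forall x, continuous f x.
Proof.
  intros HL Hf x. apply continuity_pt_filterlim. intros eps Heps.
  exists (eps / (L + 1)). split; [apply Rdiv_lt_0_compat; lra|].
  intros y [_ Hy]. simpl in *. unfold R_dist in *.
  assert (Hclose : L * Rabs (y - x) < eps).
  { apply Rle_lt_trans with (L * (eps / (L + 1))).
    - apply Rmult_le_compat_l; lra.
    - apply (Rmult_lt_reg_r (L + 1)); [lra|]. field_simplify; lra. }
  pose proof (Hf x y) as Hxy. pose proof (Hf y x) as Hyx. rewrite Rabs_minus_sym in Hxy.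
  apply Rabs_def1; lra.
Qed.

Definition ramp (w c L x : R) : R := Rmin w (Rmax 0 (L * (x - c))).

Lemma ramp_le_top w c L x : ramp w c L x <= w.
Proof. apply Rmin_l. Qed.

Lemma ramp_nonpos_left w c L x : 0 <= L -> x <= c -> ramp w c L x <= 0.
Proof.
  intros HL Hx. unfold ramp. rewrite Rmax_left by nra. apply Rmin_r.
Qed.

Lemma ramp_top_right w c L x : 0 <= w -> w <= L * (x - c) -> w <= ramp w c L x.
Proof.
  intros Hw Hx. unfold ramp. rewrite Rmax_right by lra. rewrite Rmin_left by lra. lra.
Qed.

Lemma ramp_lipschitz w c L x y :
  0 <= L -> ramp w c L x <= ramp w c L y + L * Rabs (x - y).
Proof.
  intros HL.
  assert (Hslope : L * (x - c) <= L * (y - c) + L * Rabs (x - y)).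
  { pose proof (Rle_abs (x - y)). nra. }
  pose proof (Rabs_pos (x - y)).
  unfold ramp, Rmin, Rmax.
  repeat destruct Rle_dec; nra.
Qed.

Section Profile.

Variables (I : R -> Prop) (v e : R -> R) (K L : R).
Hypothesis v_bounds : forall t, I t -> 0 <= v t <= K.
Hypothesis v_monotone : forall s t, I s -> I t -> e s < e t -> v s <= v t.
Hypothesis L_ge0 : 0 <= L.

Definition ramp_values (x r : R) : Prop :=
  r = 0 \/ exists t, I t /\ r = ramp (v t) (e t) L x.

(* A continuous stand-in for [sup {v t | e t < x}]: a sup of ramps of slope [L] that rise from
   [0] at [e t] to [v t]. *)
Definition profile (x : R) : R := real (Lub_Rbar (ramp_values x)).

Lemma ramp_values_le x r : ramp_values x r -> r <= Rmax 0 K.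
Proof.
  intros [-> | [s [Is ->]]]; [apply Rmax_l|].
  apply Rle_trans with (v s); [apply ramp_le_top|].
  apply Rle_trans with K; [apply v_bounds, Is | apply Rmax_r].
Qed.

Lemma profile_ge_ramp t x : I t -> ramp (v t) (e t) L x <= profile x.
Proof.
  intros It. apply (real_Lub_Rbar_ub _ _ _ (ramp_values_le x)).
  right; exists t; auto.
Qed.

Lemma profile_nonneg x : 0 <= profile x.
Proof. apply (real_Lub_Rbar_ub _ _ _ (ramp_values_le x)). left; reflexivity. Qed.

Lemma profile_le_level t x : I t -> x <= e t -> profile x <= v t.
Proof.
  intros It Hx. apply (real_Lub_Rbar_lub _ _ 0); [left; reflexivity|].
  intros r [-> | [s [Is ->]]]; [apply v_bounds, It|].
  destruct (Rlt_dec (e s) (e t)) as [Hlt | Hge].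
  - apply Rle_trans with (v s); [apply ramp_le_top | apply v_monotone; auto].
  - apply Rle_trans with 0; [apply ramp_nonpos_left; lra | apply v_bounds, It].
Qed.

Lemma profile_ge_level t x : I t -> v t <= L * (x - e t) -> v t <= profile x.
Proof.
  intros It Hx. apply Rle_trans with (ramp (v t) (e t) L x).
  - apply ramp_top_right; [apply v_bounds, It | exact Hx].
  - apply profile_ge_ramp, It.
Qed.

Lemma profile_lipschitz x y : profile x <= profile y + L * Rabs (x - y).
Proof.
  apply (real_Lub_Rbar_lub _ _ 0); [left; reflexivity|].
  pose proof (Rabs_pos (x - y)).
  intros r [-> | [s [Is ->]]].
  - pose proof (profile_nonneg y). nra.
  - pose proof (profile_ge_ramp s y Is). pose proof (ramp_lipschitz (v s) (e s) L x y L_ge0). lra.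
Qed.

Lemma profile_continuous x : continuous profile x.
Proof. exact (lipschitz_continuous profile L L_ge0 profile_lipschitz x). Qed.

End Profile.

Lemma continuous_of_is_derive (f : R -> R) (x l : R) : is_derive f x l -> continuous f x.
Proof. intros Hf. apply (ex_derive_continuous (K:=R_AbsRing) (V:=R_NormedModule)). exists l; exact Hf. Qed.

Lemma uniformly_small_near_zeros (D d : R -> R) (a b : R) :
  a <= b ->
  (forall t, a <= t <= b -> continuous D t) ->
  (forall t, a <= t <= b -> continuous d t) ->
  (forall t, a <= t <= b -> d t = 0 -> D t = 0) ->
  forall eps, 0 < eps -> exists delta, 0 < delta /\
    forall t, a <= t <= b -> Rabs (d t) < delta -> Rabs (D t) < eps.
Proof.
  intros Hab HD Hd Hzero eps Heps.
  (* [F t = |d t| + 2 max(0, eps - |D t|)] is continuous and positive, so it has a positive minimum. *)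
  set (F := fun t => Rabs (d t) + (Rabs (eps - Rabs (D t)) + (eps - Rabs (D t)))).
  assert (HF : forall t, a <= t <= b -> continuity_pt F t).
  { intros t Ht. apply continuity_pt_filterlim.
    apply (continuous_plus (fun t => Rabs (d t))).
    - apply continuous_Rabs_comp, Hd, Ht.
    - apply (continuous_plus (fun t => Rabs (eps - Rabs (D t)))).
      + apply continuous_Rabs_comp, (continuous_minus (fun _ => eps) (fun t => Rabs (D t))).
        * apply continuous_const.
        * apply continuous_Rabs_comp, HD, Ht.
      + apply (continuous_minus (fun _ => eps) (fun t => Rabs (D t))).
        * apply continuous_const.
        * apply continuous_Rabs_comp, HD, Ht. }
  assert (Hpos : forall t, a <= t <= b -> 0 < F t).
  { intros t Ht. unfold F. pose proof (Rabs_pos (d t)).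
    destruct (Rlt_dec (Rabs (D t)) eps) as [Hlt | Hge].
    - rewrite (Rabs_right (eps - Rabs (D t))) by lra. lra.
    - destruct (Req_dec (d t) 0) as [Hd0 | Hd0].
      + rewrite (Hzero t Ht Hd0), Rabs_R0 in Hge. lra.
      + pose proof (Rabs_pos_lt _ Hd0). pose proof (Rabs_maj2 (eps - Rabs (D t))). lra. }
  destruct (continuity_ab_min F a b Hab HF) as [t0 [Hmin Ht0]].
  exists (F t0). split; [apply Hpos, Ht0|].
  intros t Ht Hdt. specialize (Hmin t Ht).
  destruct (Rlt_dec (Rabs (D t)) eps) as [Hlt | Hge]; [exact Hlt|].
  unfold F at 2 in Hmin. rewrite (Rabs_left1 (eps - Rabs (D t))) in Hmin by lra. lra.
Qed.

Lemma RInt_comp_cycle (f m D : R -> R) (a b : R) :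
  (forall t, Rmin a b <= t <= Rmax a b -> is_derive m t (D t) /\ continuous D t) ->
  (forall t, Rmin a b <= t <= Rmax a b -> continuous f (m t)) ->
  m b = m a ->
  RInt (fun t => D t * f (m t)) a b = 0.
Proof.
  intros Hm Hf Hcycle.
  pose proof (RInt_comp f m D a b Hf Hm) as Hsubst.
  rewrite Hcycle, RInt_point in Hsubst. exact Hsubst.
Qed.

Lemma Rabs_div_le (c z eps a : R) : 0 < a <= z -> Rabs c <= eps -> Rabs (c / z) <= eps / a.
Proof.
  intros Hz Hc. unfold Rdiv. rewrite Rabs_mult, Rabs_inv, (Rabs_right z) by lra.
  apply Rmult_le_compat; [apply Rabs_pos | left; apply Rinv_0_lt_compat; lra | exact Hc |].
  apply Rinv_le_contravar; lra.
Qed.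

Lemma div_le_div_of_sign (c y w p : R) :
  0 < y + w -> 0 < y + p -> c * (p - w) <= 0 -> c / (y + w) <= c / (y + p).
Proof.
  intros Hw Hp Hc.
  assert (E : c / (y + w) - c / (y + p) = c * (p - w) / ((y + w) * (y + p))) by (field; lra).
  assert (c * (p - w) / ((y + w) * (y + p)) <= 0).
  { unfold Rdiv. apply Rmult_le_0_r; [exact Hc|]. left. apply Rinv_0_lt_compat. nra. }
  lra.
Qed.

Lemma RInt_scal_minus (c : R) (f g : R -> R) (a b : R) :
  ex_RInt f a b -> ex_RInt g a b ->
  RInt (fun t => c * (f t - g t)) a b = c * (RInt f a b - RInt g a b).
Proof.
  intros Hf Hg. transitivity (c * RInt (fun t => f t - g t) a b).
  - apply (RInt_scal (fun t => f t - g t)). apply (ex_RInt_minus f g); assumption.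
  - f_equal. apply (RInt_minus f g); assumption.
Qed.

Section Tracking.

Variables (T a : R) (m D v e : R -> R).
Hypothesis T_ge0 : 0 <= T.
Hypothesis a_gt0 : 0 < a.
Hypothesis m_ge_a : forall t, 0 <= t <= T -> a <= m t.
Hypothesis m_derive : forall t, 0 <= t <= T -> is_derive m t (D t).
Hypothesis D_continuous : forall t, 0 <= t <= T -> continuous D t.
Hypothesis v_continuous : forall t, 0 <= t <= T -> continuous v t.
Hypothesis e_continuous : forall t, 0 <= t <= T -> continuous e t.
Hypothesis v_ge0 : forall t, 0 <= t <= T -> 0 <= v t.
Hypothesis rising_below : forall t, 0 <= t <= T -> 0 < D t -> m t < e t.
Hypothesis falling_above : forall t, 0 <= t <= T -> D t < 0 -> e t < m t.
Hypothesis v_monotone : forall s t, 0 <= s <= T -> 0 <= t <= T -> e s < e t -> v s <= v t.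
Hypothesis m_cycle : m T = m 0.

Lemma in_time_interval t : Rmin 0 T <= t <= Rmax 0 T -> 0 <= t <= T.
Proof. rewrite Rmin_left, Rmax_right by lra. tauto. Qed.

Lemma m_continuous t : 0 <= t <= T -> continuous m t.
Proof. intros Ht. exact (continuous_of_is_derive _ _ _ (m_derive t Ht)). Qed.

Lemma ex_RInt_div_shifted (w : R -> R) :
  (forall t, 0 <= t <= T -> continuous w t /\ 0 <= w t) ->
  ex_RInt (fun t => D t / (m t + w t)) 0 T.
Proof.
  intros Hw. apply (ex_RInt_continuous (V:=R_CompleteNormedModule)).
  intros t Ht%in_time_interval. destruct (Hw t Ht) as [Hwc Hw0].
  apply (continuous_mult D (fun t => / (m t + w t))); [apply D_continuous, Ht|].
  apply continuous_Rinv_comp.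
  - apply (continuous_plus m w); [apply m_continuous, Ht | exact Hwc].
  - pose proof (m_ge_a t Ht). lra.
Qed.

Lemma shift_defect_le eps delta p t :
  0 <= t <= T -> 0 <= eps ->
  (Rabs (m t - e t) < delta -> Rabs (D t) < eps) ->
  0 <= p -> (m t <= e t -> p <= v t) -> (e t + delta <= m t -> v t <= p) ->
  D t / (m t + v t) - D t / (m t + p) <= 2 * eps / a.
Proof.
  intros Ht Heps Hband Hp Hbelow Habove.
  pose proof (m_ge_a t Ht). pose proof (v_ge0 t Ht).
  destruct (Rlt_dec (Rabs (D t)) eps) as [Hsmall | Hlarge].
  - pose proof (Rabs_div_le (D t) (m t + v t) eps a ltac:(lra) ltac:(lra)).
    pose proof (Rabs_div_le (D t) (m t + p) eps a ltac:(lra) ltac:(lra)).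
    pose proof (Rle_abs (D t / (m t + v t))). pose proof (Rabs_maj2 (D t / (m t + p))).
    unfold Rdiv in *. lra.
  - assert (Hsign : D t * (p - v t) <= 0).
    { destruct (Rtotal_order (D t) 0) as [Hneg | [Hzero | Hpos]].
      - assert (Hfar : delta <= Rabs (m t - e t)).
        { destruct (Rle_dec delta (Rabs (m t - e t))) as [Hle | Hlt]; [exact Hle|].
          exfalso. apply Hlarge, Hband. lra. }
        pose proof (falling_above t Ht Hneg).
        rewrite Rabs_right in Hfar by lra. specialize (Habove ltac:(lra)). nra.
      - rewrite Hzero. lra.
      - pose proof (rising_below t Ht Hpos). specialize (Hbelow ltac:(lra)). nra. }
    pose proof (div_le_div_of_sign (D t) (m t) (v t) p ltac:(lra) ltac:(lra) Hsign).
    assert (0 <= 2 * eps / a) by (apply Rdiv_le_0_compat; lra).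
    lra.
Qed.

Lemma band_profile delta :
  0 < delta -> exists phi : R -> R,
    (forall x, continuous phi x) /\ (forall x, 0 <= phi x) /\
    (forall t x, 0 <= t <= T -> x <= e t -> phi x <= v t) /\
    (forall t x, 0 <= t <= T -> e t + delta <= x -> v t <= phi x).
Proof.
  intros Hdelta.
  destruct (continuity_ab_maj v 0 T T_ge0) as [tK [HK HtK]].
  { intros t Ht. apply continuity_pt_filterlim, v_continuous, Ht. }
  set (I := fun t => 0 <= t <= T).
  assert (v_bounds : forall t, I t -> 0 <= v t <= v tK) by (intros t Ht; split; auto).
  (* Slope [v tK / delta] makes every ramp reach its top within [delta] of its foot. *)
  set (L := v tK / delta).
  assert (HL : 0 <= L) by (apply Rdiv_le_0_compat; [apply v_ge0, HtK | exact Hdelta]).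
  exists (profile I v e L). split; [|split; [|split]].
  - exact (profile_continuous I v e (v tK) L v_bounds HL).
  - exact (profile_nonneg I v e (v tK) L v_bounds).
  - exact (profile_le_level I v e (v tK) L v_bounds v_monotone HL).
  - intros t x Ht Hx. apply (profile_ge_level I v e (v tK) L v_bounds t x Ht).
    pose proof (v_ge0 tK HtK). apply Rle_trans with (v tK); [apply HK, Ht|].
    unfold L. apply (Rmult_le_reg_r delta); [exact Hdelta|]. field_simplify; [nra | lra].
Qed.

Lemma RInt_tracking_le eps :
  0 < eps -> RInt (fun t => D t / (m t + v t)) 0 T <= 2 * eps / a * T.
Proof.
  intros Heps.
  destruct (uniformly_small_near_zeros D (fun t => m t - e t) 0 T T_ge0 D_continuous)
    with (eps := eps) as [delta [Hdelta Hband]]; [| |exact Heps|].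
  { intros t Ht. apply (continuous_minus m e); [apply m_continuous | apply e_continuous]; exact Ht. }
  { intros t Ht Hmeet. destruct (Rtotal_order (D t) 0) as [Hneg | [Hzero | Hpos]]; [| exact Hzero |].
    - pose proof (falling_above t Ht Hneg). lra.
    - pose proof (rising_below t Ht Hpos). lra. }
  destruct (band_profile delta Hdelta) as [phi [phi_continuous [phi_nonneg [phi_below phi_above]]]].
  set (f := fun t => D t / (m t + v t)).
  set (g := fun t => D t * / (m t + phi (m t))).
  assert (Hf : ex_RInt f 0 T) by (apply ex_RInt_div_shifted; auto).
  assert (Hg : ex_RInt g 0 T).
  { apply (ex_RInt_div_shifted (fun t => phi (m t))). intros t Ht. split; [|apply phi_nonneg].
    apply (continuous_comp m phi); [apply m_continuous, Ht | apply phi_continuous]. }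
  assert (Hcycle : RInt g 0 T = 0).
  { apply (RInt_comp_cycle (fun z => / (z + phi z)) m D 0 T); [| |exact m_cycle].
    - intros t Ht%in_time_interval. auto.
    - intros t Ht%in_time_interval. apply continuous_Rinv_comp.
      + apply (continuous_plus (fun z => z) phi); [apply continuous_id | apply phi_continuous].
      + cbv beta. pose proof (m_ge_a t Ht). pose proof (phi_nonneg (m t)). lra. }
  assert (Hdefect : RInt (fun t => f t - g t) 0 T <= RInt (fun _ => 2 * eps / a) 0 T).
  { apply RInt_le; [exact T_ge0 | apply (ex_RInt_minus f g); auto | apply ex_RInt_const |].
    intros t Ht. apply (shift_defect_le eps delta); [lra | lra | apply Hband; lra | ..].
    - apply phi_nonneg.
    - apply phi_below; lra.
    - apply phi_above; lra. }
  rewrite (RInt_minus f g) in Hdefect by auto.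
  rewrite RInt_const, Hcycle in Hdefect. unfold minus, plus, opp, scal in Hdefect; simpl in Hdefect.
  unfold mult in Hdefect; simpl in Hdefect. lra.
Qed.

Lemma RInt_tracking_nonpos : RInt (fun t => D t / (m t + v t)) 0 T <= 0.
Proof.
  apply Rle_plus_epsilon. intros eta Heta.
  assert (Hpos : 0 < eta * a / (2 * (T + 1))) by (apply Rdiv_lt_0_compat; nra).
  pose proof (RInt_tracking_le _ Hpos) as Hle.
  assert (2 * (eta * a / (2 * (T + 1))) / a * T <= eta).
  { apply (Rmult_le_reg_r (T + 1)); [lra|]. field_simplify; nra. }
  lra.
Qed.

Lemma RInt_info_form_nonneg :
  0 <= RInt (fun t => / 2 * (D t * / m t - D t / (m t + v t))) 0 T.
Proof.
  assert (Hinv : ex_RInt (fun t => D t * / m t) 0 T).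
  { apply (ex_RInt_continuous (V:=R_CompleteNormedModule)).
    intros t Ht%in_time_interval. apply (continuous_mult D (fun t => / m t)).
    - apply D_continuous, Ht.
    - apply continuous_Rinv_comp; [apply m_continuous, Ht | pose proof (m_ge_a t Ht); lra]. }
  assert (Hcycle : RInt (fun t => D t * / m t) 0 T = 0).
  { apply (RInt_comp_cycle Rinv m D 0 T); [| |exact m_cycle].
    - intros t Ht%in_time_interval. auto.
    - intros t Ht%in_time_interval. apply continuous_Rinv. pose proof (m_ge_a t Ht). lra. }
  rewrite RInt_scal_minus, Hcycle by (auto; apply ex_RInt_div_shifted; auto).
  pose proof RInt_tracking_nonpos. lra.
Qed.

End Tracking.

Lemma le_of_comonotone_lt (f h : R -> R) (x y : R) :
  (forall x y, x <= y -> f x <= f y) -> (forall x y, x <= y -> h x <= h y) ->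
  h x < h y -> f x <= f y.
Proof.
  intros Hf Hh Hlt. apply Hf. destruct (Rle_dec x y) as [Hle | Hgt]; [exact Hle|].
  pose proof (Hh y x ltac:(lra)). lra.
Qed.

Lemma info_coef_split (sR2 : R) (sigma2 : R -> R) (mu m d : R) :
  0 < sR2 -> 0 <= sigma2 mu -> 0 < m ->
  info_coef sR2 sigma2 mu m * d = / 2 * (d * / m - d / (m + sigma2 mu / sR2)).
Proof.
  intros HsR2 Hsig Hm. unfold info_coef.
  assert (0 < m * sR2) by (apply Rmult_lt_0_compat; lra).
  field. repeat split; lra.
Qed.

Theorem mainTheorem1
  (sR2 : R) (sigma2 meq : R -> R) (g : R -> R -> R)
  (mu m : R -> R) (T : R)
  (HsR2 : 0 < sR2)
  (Hsig_nonneg : forall x, 0 <= sigma2 x)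
  (Hsig_cont : forall x, continuous sigma2 x)
  (Hsig_mono : forall x y, x <= y -> sigma2 x <= sigma2 y)
  (Hmeq_pos : forall x, 0 < meq x)
  (Hmeq_cont : forall x, continuous meq x)
  (Hmeq_mono : forall x y, x <= y -> meq x <= meq y)
  (Hg_sign : tracks_monotonically g)
  (Hg_cont : forall x y, 0 < x -> 0 < y ->
      continuous (fun p : R * R => g (fst p) (snd p)) (x, y))
  (HT : 0 <= T)
  (Hmu_cont : forall t, 0 <= t <= T -> continuous mu t)
  (Hm_pos : forall t, 0 <= t <= T -> 0 < m t)
  (Hode : forall t, 0 <= t <= T -> is_derive m t (g (m t) (meq (mu t))))
  (Hcyc_mu : mu T = mu 0)
  (Hcyc_m : m T = m 0) :
  0 <= RInt (fun t => info_coef sR2 sigma2 (mu t) (m t) * Derive m t) 0 T.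
Proof.
  (* Only the closure of the [m]-trajectory enters. *)
  set (D := fun t => g (m t) (meq (mu t))).
  set (v := fun t => sigma2 (mu t) / sR2).
  set (e := fun t => meq (mu t)).
  assert (m_continuous : forall t, 0 <= t <= T -> continuous m t)
    by (intros t Ht; exact (continuous_of_is_derive _ _ _ (Hode t Ht))).
  assert (e_continuous : forall t, 0 <= t <= T -> continuous e t)
    by (intros t Ht; apply (continuous_comp mu meq); auto).
  destruct (continuity_ab_min m 0 T HT) as [tmin [Hmin Htmin]].
  { intros t Ht. apply continuity_pt_filterlim, m_continuous, Ht. }
  rewrite (RInt_ext _ (fun t => / 2 * (D t * / m t - D t / (m t + v t)))).
  - apply (RInt_info_form_nonneg T (m tmin) m D v e); auto.
    + intros t Ht. apply (continuous_comp_2 m e g); auto.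
      apply Hg_cont; [apply Hm_pos, Ht | apply Hmeq_pos].
    + intros t Ht. apply (continuous_mult (fun t => sigma2 (mu t)) (fun _ => / sR2)).
      * apply (continuous_comp mu sigma2); auto.
      * apply continuous_const.
    + intros t Ht. apply Rdiv_le_0_compat; auto.
    + intros t Ht HD. apply (Hg_sign (m t) (e t) (Hm_pos t Ht) (Hmeq_pos _)), HD.
    + intros t Ht HD. apply (Hg_sign (m t) (e t) (Hm_pos t Ht) (Hmeq_pos _)), HD.
    + intros s t _ _ Hlt. apply Rmult_le_compat_r; [left; apply Rinv_0_lt_compat, HsR2|].
      exact (le_of_comonotone_lt sigma2 meq (mu s) (mu t) Hsig_mono Hmeq_mono Hlt).
  - intros t Ht. rewrite Rmin_left, Rmax_right in Ht by lra.
    rewrite (is_derive_unique m t _ (Hode t ltac:(lra))).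
    apply info_coef_split; [exact HsR2 | apply Hsig_nonneg | apply Hm_pos; lra].
Qed.
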